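(* For any $p\ge 1$, $$\lim_{x\to\infty}\frac{-\ln\big(\nu_p([x,\infty))\big)}{\Lambda_{\nu_p}^{\ast}(x)}=1.$$
   Context: For $p\ge1$, $\nu_p$ is the probability measure on $\mathbb{R}$ with density $(2\gamma_p)^{-1}\exp(-|x|^p)$, where $\gamma_p=\Gamma(1+1/p)$. $\Lambda_{\nu_p}(t)=\ln\int_{\mathbb{R}}e^{tx}\,d\nu_p(x)$ and $\Lambda_{\nu_p}^{\ast}(x)=\sup_{t\in\mathbb{R}}\{tx-\Lambda_{\nu_p}(t)\}$. *)

From HB Require Import structures.
From mathcomp Require Import all_boot all_order all_algebra.
From mathcomp Require Import all_classical all_reals all_analysis.
Set Implicit Arguments. Unset Strict Implicit. Unset Printing Implicit Defensive.
Import Order.TTheory GRing.Theory Num.Theory.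
Import numFieldNormedType.Exports.
Local Open Scope classical_set_scope.
Local Open Scope ring_scope.

Section Defs.
Variable R : realType.
Notation mu := (@lebesgue_measure R).

Definition Gamma (s : R) : R :=
  fine (\int[mu]_(t in `]0, +oo[) (t `^ (s - 1) * expR (- t))%:E).

Definition gamma_p (p : R) : R := Gamma (1 + p^-1).

Definition nu_density (p : R) (x : R) : R :=
  (2 * gamma_p p)^-1 * expR (- (`|x| `^ p)).

Definition nu (p : R) (A : set R) : \bar R :=
  \int[mu]_(x in A) (nu_density p x)%:E.

Definition mgf (p : R) (t : R) : \bar R :=
  \int[mu]_(x in setT) (expR (t * x) * nu_density p x)%:E.

Definition Lambda (p : R) (t : R) : \bar R :=
  match mgf p t with
  | r%:E => (ln r)%:E
  | +oo%E => +oo%E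
  | -oo%E => -oo%E
  end.

Definition Lambda_star (p : R) (x : R) : \bar R :=
  ereal_sup [set ((t * x)%:E - Lambda p t)%E | t in [set: R]].

End Defs.

(* The density of nu_p is c exp (- |y| ^ p).  Bounding it below by its value
   at x + 1 on [x, x + 1], and above on [x, +oo[ via the tangent of y ^ p at x
   (slope >= 1), gives x ^ p - ln c <= - ln nu_p [x, +oo[ <= (x + 1) ^ p - ln c.
   Restricting the moment generating function to a unit interval next to x gives
   Lambda t >= t x - (x + 1) ^ p + ln c, hence Lambda* x <= (x + 1) ^ p - ln c.
   Conversely, for the tilt t = (1 - d) p x ^ (p - 1), writing
   |y| ^ p = (1 - d) |y| ^ p + d |y| ^ p and bounding the two parts by the tangent
   at x and by |y| - 1 dominates e ^ (t y) exp (- |y| ^ p) by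
   C_d exp (t x - (1 - d) x ^ p - d |y|), so Lambda* x >= (1 - d) x ^ p - ln C_d.
   Since (x + 1) ^ p ~ x ^ p, both quantities are x ^ p (1 + o(1)). *)

From HB Require Import structures.
From mathcomp Require Import all_boot all_order all_algebra.
From mathcomp Require Import all_classical all_reals all_analysis.
From mathcomp Require Import measurable_realfun ring lra.
Set Implicit Arguments. Unset Strict Implicit. Unset Printing Implicit Defensive.
Import Order.TTheory GRing.Theory Num.Theory.
Import numFieldNormedType.Exports.
Local Open Scope classical_set_scope.
Local Open Scope ring_scope.

Section real_inequalities.
Context {R : realType}.

Lemma powR_tangent_le (a b p : R) : 0 < a -> 0 <= b -> 1 <= p ->
  a `^ p + p * a `^ (p - 1) * (b - a) <= b `^ p.
Proof.
move=> a0 b0 p1; have [<-|p_neq1] := eqVneq 1 p.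
  by rewrite subrr powRr0 (powRr1 (ltW a0)) (powRr1 b0); lra.
have p_gt1 : 1 < p by rewrite lt_neqAle p_neq1 p1.
have p0 : 0 < p by lra.
have p1_gt0 : 0 < p - 1 by lra.
(* Young's inequality for [a ^ (p - 1)] and [b] with conjugate exponents [p / (p - 1)] and [p] *)
have conj : (p / (p - 1))^-1 + p^-1 = 1 by rewrite invf_div; field; rewrite gt_eqF.
have := conjugate_powR (powR_ge0 a (p - 1)) b0 (divr_gt0 p0 p1_gt0) p0 conj.
rewrite -powRrM (_ : (p - 1) * (p / (p - 1)) = p); last by field; rewrite gt_eqF.
rewrite -(ler_pM2l p0) (_ : p * (_ + _) = (p - 1) * a `^ p + b `^ p); last first.
  by field; rewrite !gt_eqF.
have <- : a * a `^ (p - 1) = a `^ p by rewrite mulr_powRB1 // ltW.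
nra.
Qed.

Lemma powR_norm_tangent_le (a y p : R) : 0 < a -> 1 <= p ->
  a `^ p + p * a `^ (p - 1) * (y - a) <= `|y| `^ p.
Proof.
move=> a0 p1; apply: le_trans _ (powR_tangent_le a0 (normr_ge0 y) p1).
by rewrite lerD2l ler_pM2l ?mulr_gt0 ?powR_gt0 ?lerD2r ?ler_norm //; lra.
Qed.

Lemma normr_sub1_le_powR (y p : R) : 1 <= p -> `|y| - 1 <= `|y| `^ p.
Proof.
move=> p1; have [y1|y1] := leP 1 `|y|.
  by apply: le_trans _ (le1r_powR y1 p1); lra.
by apply: le_trans _ (powR_ge0 _ _); lra.
Qed.

Lemma powR_le1D (t q : R) : 0 <= t -> 0 <= q <= 1 -> t `^ q <= 1 + t.
Proof.
move=> t_ge0 /andP[q0 q1]; have [->|t_neq0] := eqVneq t 0.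
  have [->|q_neq0] := eqVneq q 0; first by rewrite powRr0; lra.
  by rewrite powR0 //; lra.
have t0 : 0 < t by rewrite lt_neqAle eq_sym t_neq0.
have [t1|t1] := leP 1 t; first by apply: le_trans (ler1_powR t1 q1) _; lra.
have : t `^ q <= t `^ 0 by apply: ger_powR; rewrite // t0 ltW.
by rewrite powRr0; lra.
Qed.

End real_inequalities.

Section exponential_integrals.
Context {R : realType}.
Notation mu := (@lebesgue_measure R).

Lemma continuous_expRNM (k : R) : continuous (fun y : R => expR (- (k * y))).
Proof.
move=> z; apply: continuous_comp; last exact: continuous_expR.
by apply: (@continuousN _ R^o); apply: continuousM => //; exact: cst_continuous.
Qed.

Lemma measurable_expRNM (k : R) : measurable_fun [set: R] (fun y => expR (- (k * y))).
Proof.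
apply: measurableT_comp; first exact: measurable_expR.
by apply: measurableT_comp => //; exact: measurable_funM.
Qed.

Lemma integral_expRNM_itvcy (k a : R) : 0 < k ->
  (\int[mu]_(y in `[a, +oo[) (expR (- (k * y)))%:E = (expR (- (k * a)) / k)%:E)%E.
Proof.
move=> k0.
rewrite (@ge0_continuous_FTC2y _ (fun y => expR (- (k * y)))
  (fun y => - (expR (- (k * y)) / k)) a 0).
- by rewrite -EFinB sub0r opprK.
- by move=> ? ?; exact: expR_ge0.
- exact/continuous_subspaceT/continuous_expRNM.
- rewrite -oppr0; apply: cvgN; rewrite -(mul0r k^-1); apply: cvgMl.
  apply: (@cvg_comp _ _ _ (fun z => k * z) (fun z => expR (- z)) _ (pinfty_nbhs R)).
    exact: gt0_cvgMry.
  exact: cvgr_expR.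
- by move=> x _; apply: derivableN; apply: derivableM.
- by apply: cvg_at_right_filter; apply: cvgN; apply: cvgMl; exact: continuous_expRNM.
- move=> x _.
  rewrite (_ : (fun y => - (expR (- (k * y)) / k)) = - (fun y => expR (- (k * y)) * k^-1)) //.
  rewrite derive1N// derive1Mr//.
  rewrite (_ : (fun y => expR (- (k * y))) = expR \o (fun y => - (k * y))) //.
  rewrite derive1_comp// derive1N// derive1Ml// derive1_id derive1E.
  have /funeqP -> := @derive_expR R.
  by field; rewrite gt_eqF.
Qed.

Lemma integral_expRNM_normr (k : R) : 0 < k ->
  (\int[mu]_y (expR (- (k * `|y|)))%:E = (2 / k)%:E)%E.
Proof.
move=> k0; rewrite ge0_symfun_integralT.
- rewrite -set_itvcy.
  under eq_integral => y.
    rewrite inE /= in_itv /= andbT => y0.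
    rewrite ger0_norm //.
    over.
  by rewrite integral_expRNM_itvcy // mulr0 oppr0 expR0 -EFinM mul1r.
- by move=> ?; exact: expR_ge0.
- move=> z; apply: continuous_comp; last exact: continuous_expR.
  apply: (@continuousN _ R^o); apply: continuousM; first exact: cst_continuous.
  exact: norm_continuous.
- by move=> y /=; rewrite normrN.
Qed.

Lemma cst_le_integral_itv1 (D : set R) (f : R -> R) (a m : R) :
  measurable D -> `[a, a + 1] `<=` D -> measurable_fun D f ->
  (forall y, D y -> 0 <= f y) -> 0 <= m -> (forall y, a <= y <= a + 1 -> m <= f y) ->
  (m%:E <= \int[mu]_(y in D) (f y)%:E)%E.
Proof.
move=> mD aD mf f0 m0 fm.
apply: (@le_trans _ _ (\int[mu]_(y in `[a, (a + 1)%R]) (f y)%:E)%E); last first.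
  apply: ge0_subset_integral => //.
  by apply/measurable_EFinP; exact: mf.
apply: (@le_trans _ _ (\int[mu]_(y in `[a, (a + 1)%R]) (cst m%:E y))%E).
  rewrite integral_cst //= lebesgue_measure_itv /= ifT; last by rewrite lte_fin; lra.
  by rewrite -EFinD -EFinM lee_fin addrAC subrr add0r mulr1.
apply: ge0_le_integral => //.
by apply/measurable_EFinP; exact: measurable_funS mD aD mf.
Qed.

Lemma Gamma_integral_gt0 (q : R) : 0 <= q ->
  (0 < \int[mu]_(t in `]0%R, +oo[) (t `^ q * expR (- t))%:E)%E.
Proof.
move=> q0; apply: (@lt_le_trans _ _ (expR (- 2))%:E); first by rewrite lte_fin expR_gt0.
apply: (@cst_le_integral_itv1 _ (fun t => t `^ q * expR (- t)) 1).
- exact: measurable_itv.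
- by move=> t; rewrite /= !in_itv /= andbT => /andP[t1 _]; lra.
- apply: measurable_funTS; apply: measurable_funM; first exact: measurable_powR.
  by apply: measurableT_comp; [exact: measurable_expR|exact: oppr_measurable].
- by move=> t _; rewrite mulr_ge0 ?powR_ge0 ?expR_ge0.
- exact: expR_ge0.
move=> t /andP[t1 t2]; rewrite -[X in X <= _]mul1r ler_pM ?expR_ge0 //.
  by have := @ler_powR R t t1 0 q; rewrite powRr0; apply.
by rewrite ler_expR; lra.
Qed.

Lemma Gamma_integral_le4 (q : R) : 0 <= q <= 1 ->
  (\int[mu]_(t in `]0%R, +oo[) (t `^ q * expR (- t))%:E <= 4%:E)%E.
Proof.
move=> q01.
have mf : measurable_fun [set: R] (fun t : R => t `^ q * expR (- t)).
  apply: measurable_funM; first exact: measurable_powR.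
  by apply: measurableT_comp; [exact: measurable_expR|exact: oppr_measurable].
rewrite integral_itv_obnd_cbnd; last exact/measurable_EFinP/measurable_funTS.
apply: (@le_trans _ _ (\int[mu]_(t in `[0%R, +oo[) (2 * expR (- (2^-1 * t)))%:E)%E).
  apply: ge0_le_integral => //.
  - by move=> t _; rewrite lee_fin mulr_ge0 ?powR_ge0 ?expR_ge0.
  - exact/measurable_EFinP/measurable_funTS.
  - apply/measurable_EFinP/measurable_funTS/measurable_funM => //.
    exact: measurable_expRNM.
  move=> t; rewrite /= in_itv /= andbT => t0; rewrite lee_fin.
  (* [t ^ q <= 1 + t <= 2 e ^ (t / 2)] *)
  have h1 := powR_le1D t0 q01.
  have h2 := expR_ge1Dx (t / 2).
  apply: (@le_trans _ _ (2 * expR (t / 2) * expR (- t))).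
    by rewrite ler_pM2r ?expR_gt0 //; lra.
  by rewrite -mulrA -expRD ler_pM2l // ler_expR; lra.
under eq_integral => t _ do rewrite EFinM.
rewrite ge0_integralZl_EFin //.
- by rewrite integral_expRNM_itvcy ?mulr0 ?oppr0 ?expR0 -?EFinM ?lee_fin; lra.
- by apply/measurable_EFinP; apply: measurable_funTS; exact: measurable_expRNM.
Qed.

Lemma Gamma_gt0 (s : R) : 1 <= s <= 2 -> 0 < Gamma s.
Proof.
move=> /andP[s1 s2]; have q0 : 0 <= s - 1 by lra.
have := Gamma_integral_gt0 q0.
have q01 : 0 <= s - 1 <= 1 by rewrite q0 /=; lra.
have := Gamma_integral_le4 q01.
by rewrite /Gamma; case: (\int[mu]_(t in _) _)%E.
Qed.

End exponential_integrals.

Section ratio_limits.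
Context {R : realType}.

Lemma cvg_ratio1_sandwich (f u : R -> R) :
  (\forall x \near +oo, 0 < u x) ->
  (forall s, 0 < s -> \forall x \near +oo, (1 - s) * u x <= f x <= (1 + s) * u x) ->
  f x / u x @[x --> +oo] --> (1 : R).
Proof.
move=> u_gt0 fu; apply/cvgrPdist_lt => e e0; near=> x.
have ux0 : 0 < u x by near: x.
have /andP[lo hi] : (1 - e / 2) * u x <= f x <= (1 + e / 2) * u x.
  by near: x; apply: fu; rewrite divr_gt0.
have lo' : 1 - e / 2 <= f x / u x by rewrite ler_pdivlMr // mulrC.
have hi' : f x / u x <= 1 + e / 2 by rewrite ler_pdivrMr // mulrC.
by rewrite ltr_norml; apply/andP; split; lra.
Unshelve. all: end_near.
Qed.

Lemma cvg_ratio1_trans (f g u : R -> R) :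
  (\forall x \near +oo, u x != 0) ->
  f x / u x @[x --> +oo] --> (1 : R) -> g x / u x @[x --> +oo] --> (1 : R) ->
  f x / g x @[x --> +oo] --> (1 : R).
Proof.
move=> u_neq0 fu gu.
have : (f x / u x) / (g x / u x) @[x --> +oo] --> (1 / 1 : R).
  by apply: cvgM => //; apply: cvgV => //; exact: oner_neq0.
rewrite divr1; apply: cvg_trans; apply: near_eq_cvg; near=> x.
by rewrite invfM invrK [_^-1 * _]mulrC mulrA divfK //; near: x.
Unshelve. all: end_near.
Qed.

End ratio_limits.

Section powR_asymptotics.
Context {R : realType}.
Variable p : R.

Lemma near_pinfty_normr_le_powR (c e : R) : 1 <= p -> 0 < e ->
  \forall x \near +oo, `|c| <= e * x `^ p.
Proof.
move=> p1 e0; near=> x.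
have x1 : 1 <= x by near: x; apply: nbhs_pinfty_ge; exact: num_real.
have cx : e^-1 * `|c| <= x by near: x; apply: nbhs_pinfty_ge; exact: num_real.
by rewrite -ler_pdivrMl // (le_trans cx) // le1r_powR.
Unshelve. all: end_near.
Qed.

Lemma near_pinfty_powR_addr1_le (s : R) : 0 <= p -> 0 < s ->
  \forall x \near +oo, (x + 1) `^ p <= (1 + s) * x `^ p.
Proof.
move=> p0 s0; have ls0 : 0 < ln (1 + s) by apply: ln_gt0; lra.
near=> x.
have x1 : 1 <= x by near: x; apply: nbhs_pinfty_ge; exact: num_real.
have px : p / ln (1 + s) <= x by near: x; apply: nbhs_pinfty_ge; exact: num_real.
have x0 : 0 < x by lra.
have xi0 : 0 < x^-1 by rewrite invr_gt0.
have -> : x + 1 = x * (1 + x^-1) by rewrite mulrDr mulr1 mulfV ?gt_eqF.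
rewrite powRM ?(ltW x0) //; last by lra.
rewrite mulrC ler_wpM2r ?powR_ge0 // /powR gt_eqF; last by lra.
rewrite -[X in _ <= X]lnK ?posrE; last by lra.
(* [p ln (1 + 1/x) <= p / x <= ln (1 + s)] *)
rewrite ler_expR; apply: (@le_trans _ _ (p * x^-1)).
  by rewrite ler_wpM2l // le_ln1Dx //; lra.
by rewrite ler_pdivrMr // mulrC -ler_pdivrMr.
Unshelve. all: end_near.
Qed.

Lemma near_pinfty_powR_addr1_addr_le (c s : R) : 1 <= p -> 0 < s ->
  \forall x \near +oo, (x + 1) `^ p + c <= (1 + s) * x `^ p.
Proof.
move=> p1 s0; near=> x.
have : (x + 1) `^ p <= (1 + s / 2) * x `^ p.
  by near: x; apply: near_pinfty_powR_addr1_le; rewrite ?divr_gt0 //; lra.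
have : `|c| <= s / 2 * x `^ p.
  by near: x; apply: near_pinfty_normr_le_powR; rewrite ?divr_gt0.
have := ler_norm c; lra.
Unshelve. all: end_near.
Qed.

Lemma near_pinfty_powR_subr_ge (c d s : R) : 1 <= p -> d < s ->
  \forall x \near +oo, (1 - s) * x `^ p <= (1 - d) * x `^ p - c.
Proof.
move=> p1 ds; near=> x.
have : `|c| <= (s - d) * x `^ p.
  by near: x; apply: near_pinfty_normr_le_powR; rewrite ?subr_gt0.
have := ler_norm c; lra.
Unshelve. all: end_near.
Qed.

End powR_asymptotics.

Section nu_tail_and_rate_function.
Context {R : realType}.
Notation mu := (@lebesgue_measure R).
Variable p : R.
Hypothesis p_ge1 : 1 <= p.

Definition nu_const : R := (2 * gamma_p p)^-1.

Lemma nu_const_gt0 : 0 < nu_const.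
Proof.
have p0 : 0 < p := lt_le_trans ltr01 p_ge1.
have pV0 : 0 <= p^-1 by rewrite invr_ge0 ltW.
have pV1 : p^-1 <= 1 by rewrite invf_le1.
by rewrite invr_gt0 mulr_gt0 // Gamma_gt0 //; apply/andP; split; lra.
Qed.

Lemma nu_densityE y : nu_density p y = nu_const * expR (- (`|y| `^ p)).
Proof. by []. Qed.

Lemma measurable_nu_density : measurable_fun [set: R] (nu_density p).
Proof.
apply: measurable_funM; first exact: measurable_cst.
apply: measurableT_comp; first exact: measurable_expR.
apply: measurableT_comp; first exact: oppr_measurable.
by apply: measurableT_comp (measurable_powR p) _; exact: normr_measurable.
Qed.

Lemma nu_density_ge0 y : 0 <= nu_density p y.
Proof. by rewrite mulr_ge0 ?expR_ge0 // ltW // nu_const_gt0. Qed.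

Lemma nu_density_ge y z : `|y| <= z -> nu_const * expR (- z `^ p) <= nu_density p y.
Proof.
move=> yz; rewrite nu_densityE ler_pM2l ?nu_const_gt0 // ler_expR lerN2.
apply: ge0_ler_powR; rewrite ?nnegrE ?(le_trans ler01 p_ge1) ?(le_trans _ yz) //.
Qed.

Lemma nu_itvcy_le x : 1 <= x -> (nu p `[x, +oo[ <= (nu_const * expR (- x `^ p))%:E)%E.
Proof.
move=> x1; have c0 := nu_const_gt0; have x0 : 0 < x by lra.
have slope1 : 1 <= p * x `^ (p - 1).
  have : 1 <= x `^ (p - 1).
    by have := ler_powR x1 (_ : 0 <= p - 1); rewrite powRr0; apply; rewrite subr_ge0.
  by move: p_ge1; nra.
rewrite /nu; apply: (@le_trans _ _
  (\int[mu]_(y in `[x, +oo[) ((nu_const * expR (- x `^ p + x)) * expR (- (1 * y)))%:E)%E).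
  apply: ge0_le_integral => //.
  - by move=> y _; rewrite lee_fin nu_density_ge0.
  - by apply/measurable_EFinP; apply: measurable_funTS; exact: measurable_nu_density.
  - apply/measurable_EFinP; apply: measurable_funTS.
    by apply: measurable_funM => //; exact: measurable_expRNM.
  move=> y; rewrite /= in_itv /= andbT => xy; rewrite lee_fin nu_densityE.
  rewrite -mulrA -expRD ler_pM2l // ler_expR.
  have := powR_norm_tangent_le y x0 p_ge1; nra.
under eq_integral => y _ do rewrite EFinM.
rewrite ge0_integralZl_EFin //.
- rewrite integral_expRNM_itvcy // -EFinM lee_fin mul1r divr1 -mulrA -expRD.
  by rewrite -addrA subrr addr0.
- by apply/measurable_EFinP; apply: measurable_funTS; exact: measurable_expRNM.
- by rewrite mulr_ge0 ?expR_ge0 // ltW.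
Qed.

Lemma nu_itvcy_ge x : 0 <= x ->
  ((nu_const * expR (- (x + 1) `^ p))%:E <= nu p `[x, +oo[)%E.
Proof.
move=> x0; apply: (cst_le_integral_itv1 (a := x)).
- exact: measurable_itv.
- by move=> y; rewrite /= !in_itv /= andbT => /andP[].
- exact: measurable_funTS measurable_nu_density.
- by move=> y _; exact: nu_density_ge0.
- by rewrite mulr_ge0 ?expR_ge0 // ltW // nu_const_gt0.
- by move=> y /andP[xy yx1]; apply: nu_density_ge; rewrite ger0_norm //; lra.
Qed.

Lemma mgf_ge x t : 1 <= x ->
  ((expR (t * x) * (nu_const * expR (- (x + 1) `^ p)))%:E <= mgf p t)%E.
Proof.
move=> x1.
have [a [a0 ax ta]] : exists a,
    [/\ 0 <= a, a <= x & forall y, a <= y <= a + 1 -> t * x <= t * y].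
  have [t0|t0] := leP 0 t.
    exists x; split => //; first lra.
    by move=> y /andP[xy _]; rewrite ler_wpM2l.
  exists (x - 1); split; try lra.
  by move=> y /andP[_ yx]; rewrite ler_nM2l //; lra.
rewrite /mgf; apply: (cst_le_integral_itv1 (f := fun y => expR (t * y) * nu_density p y) (a := a)).
- exact: measurableT.
- by [].
- apply: measurable_funM; last exact: measurable_nu_density.
  by apply: measurableT_comp; [exact: measurable_expR|exact: measurable_funM].
- by move=> y _; rewrite mulr_ge0 ?expR_ge0 ?nu_density_ge0.
- by rewrite !mulr_ge0 ?expR_ge0 // ltW // nu_const_gt0.
- move=> y /andP[ay ya1]; apply: ler_pM.
  + exact: expR_ge0.
  + by rewrite mulr_ge0 ?expR_ge0 // ltW // nu_const_gt0.
  + by rewrite ler_expR; apply: ta; rewrite ay ya1.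
  + by apply: nu_density_ge; rewrite ger0_norm; lra.
Qed.

Lemma Lambda_ge x t : 1 <= x ->
  ((t * x + ln nu_const - (x + 1) `^ p)%:E <= Lambda p t)%E.
Proof.
move=> x1; have := mgf_ge t x1.
have c0 := nu_const_gt0.
set L := expR (t * x) * _.
have L0 : 0 < L by rewrite !mulr_gt0 ?expR_gt0.
have lnL : ln L = t * x + ln nu_const - (x + 1) `^ p.
  by rewrite !lnM ?posrE ?mulr_gt0 ?expR_gt0 // !expRK addrA.
rewrite /Lambda; case: (mgf p t) => [r| |] //= => [|_]; last exact: leey.
by rewrite !lee_fin -lnL => Lr; rewrite ler_ln ?posrE // (lt_le_trans L0 Lr).
Qed.

Lemma Lambda_star_le x : 1 <= x ->
  (Lambda_star p x <= ((x + 1) `^ p - ln nu_const)%:E)%E.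
Proof.
move=> x1; apply: ge_ereal_sup => _ [t _ <-].
have := Lambda_ge t x1.
case: (Lambda p t) => [r| |] //=; last by rewrite addeNy leNye.
by rewrite -EFinD !lee_fin => ?; lra.
Qed.

(* [(1 - d)] times the slope of [y |-> y ^ p] at [x]: the tilt that nearly attains [Lambda_star p x] *)
Definition tilt (x d : R) : R := (1 - d) * p * x `^ (p - 1).

Lemma mgf_tilt_le x d : 1 <= x -> 0 < d < 1 ->
  (mgf p (tilt x d) <=
    (expR (tilt x d * x - (1 - d) * x `^ p) * (nu_const * expR d * (2 / d)))%:E)%E.
Proof.
move=> x1 /andP[d0 d1]; have c0 := nu_const_gt0; have x0 : 0 < x by lra.
set K := expR (tilt x d * x - (1 - d) * x `^ p) * nu_const * expR d.
have K0 : 0 < K by rewrite !mulr_gt0 ?expR_gt0.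
have m_dnorm : measurable_fun [set: R] (fun y => expR (- (d * `|y|))).
  apply: measurableT_comp; first exact: measurable_expR.
  apply: measurableT_comp; first exact: oppr_measurable.
  by apply: measurable_funM => //; exact: normr_measurable.
rewrite /mgf; apply: (@le_trans _ _ (\int[mu]_(y in setT) (K * expR (- (d * `|y|)))%:E)%E).
  apply: ge0_le_integral => //.
  - by move=> y _; rewrite lee_fin mulr_ge0 ?expR_ge0 ?nu_density_ge0.
  - apply/measurable_EFinP; apply: measurable_funM; last exact: measurable_nu_density.
    by apply: measurableT_comp; [exact: measurable_expR|exact: measurable_funM].
  - by apply/measurable_EFinP; exact: measurable_funM.
  move=> y _; rewrite lee_fin nu_densityE.
  rewrite [X in X <= _](_ : _ = nu_const * expR (tilt x d * y - `|y| `^ p)); last first.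
    by rewrite expRD; ring.
  rewrite [X in _ <= X](_ : _ = nu_const *
      expR (tilt x d * x - (1 - d) * x `^ p + d - d * `|y|)); last first.
    by rewrite /K !expRD; ring.
  rewrite ler_pM2l // ler_expR.
  have d1' : 0 <= 1 - d by lra.
  have tangent := ler_wpM2l d1' (powR_norm_tangent_le y x0 p_ge1).
  have linear := ler_wpM2l (ltW d0) (normr_sub1_le_powR y p_ge1).
  by rewrite /tilt; lra.
under eq_integral => y _ do rewrite EFinM.
rewrite ge0_integralZl_EFin //; last by rewrite ltW.
- by rewrite /= integral_expRNM_normr // -EFinM /K !mulrA.
- by apply/measurable_EFinP.
Qed.

Lemma Lambda_star_ge x d : 1 <= x -> 0 < d < 1 ->
  (((1 - d) * x `^ p - ln (nu_const * expR d * (2 / d)))%:E <= Lambda_star p x)%E.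
Proof.
move=> x1 d01; have c0 := nu_const_gt0; have /andP[d0 _] := d01.
apply: (@le_trans _ _ ((tilt x d * x)%:E - Lambda p (tilt x d))%E); last first.
  by apply: ereal_sup_ubound; exists (tilt x d).
have := mgf_tilt_le x1 d01; have := mgf_ge (tilt x d) x1.
rewrite /Lambda; case: (mgf p (tilt x d)) => [r| |] //=.
set U := nu_const * expR d * (2 / d).
have U0 : 0 < U by rewrite mulr_gt0 ?divr_gt0 ?mulr_gt0 ?expR_gt0.
rewrite !lee_fin => lo hi.
have r0 : 0 < r by apply: lt_le_trans lo; rewrite !mulr_gt0 ?expR_gt0.
have : ln r <= ln (expR (tilt x d * x - (1 - d) * x `^ p) * U).
  by rewrite ler_ln ?posrE // mulr_gt0 ?expR_gt0.
by rewrite lnM ?posrE ?expR_gt0 // expRK; clear lo; lra.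
Qed.

Lemma neg_ln_nu_itvcy_bounds x : 1 <= x ->
  x `^ p - ln nu_const <= - ln (fine (nu p `[x, +oo[)) <= (x + 1) `^ p - ln nu_const.
Proof.
move=> x1; have c0 := nu_const_gt0.
have := nu_itvcy_le x1; have := nu_itvcy_ge (le_trans ler01 x1).
case: (nu p _) => [n| |] //=; rewrite !lee_fin => lo hi.
have n0 : 0 < n by apply: lt_le_trans lo; rewrite mulr_gt0 ?expR_gt0.
have : ln (nu_const * expR (- (x + 1) `^ p)) <= ln n.
  by rewrite ler_ln ?posrE // mulr_gt0 ?expR_gt0.
have : ln n <= ln (nu_const * expR (- x `^ p)).
  by rewrite ler_ln ?posrE // mulr_gt0 ?expR_gt0.
rewrite !lnM ?posrE ?expR_gt0 // !expRK; clear lo hi.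
by move=> ? ?; apply/andP; split; lra.
Qed.

Lemma fine_Lambda_star_bounds x d : 1 <= x -> 0 < d < 1 ->
  (1 - d) * x `^ p - ln (nu_const * expR d * (2 / d)) <= fine (Lambda_star p x)
    <= (x + 1) `^ p - ln nu_const.
Proof.
move=> x1 d01; have := Lambda_star_le x1; have := Lambda_star_ge x1 d01.
by case: (Lambda_star p x) => [l| |] //=; rewrite !lee_fin => -> ->.
Qed.

Lemma neg_ln_nu_itvcy_ratio :
  (- ln (fine (nu p `[x, +oo[)) / x `^ p) @[x --> +oo] --> (1 : R).
Proof.
apply: cvg_ratio1_sandwich.
  by near=> x; apply: powR_gt0; near: x; apply: nbhs_pinfty_gt; exact: num_real.
move=> s s0; near=> x.
have x1 : 1 <= x by near: x; apply: nbhs_pinfty_ge; exact: num_real.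
have /andP[lo hi] := neg_ln_nu_itvcy_bounds x1.
have : (1 - s) * x `^ p <= (1 - 0) * x `^ p - ln nu_const.
  by near: x; exact: near_pinfty_powR_subr_ge.
have : (x + 1) `^ p + - ln nu_const <= (1 + s) * x `^ p.
  by near: x; exact: near_pinfty_powR_addr1_addr_le.
by move=> ? ?; apply/andP; split; lra.
Unshelve. all: end_near.
Qed.

Lemma Lambda_star_ratio : (fine (Lambda_star p x) / x `^ p) @[x --> +oo] --> (1 : R).
Proof.
apply: cvg_ratio1_sandwich.
  by near=> x; apply: powR_gt0; near: x; apply: nbhs_pinfty_gt; exact: num_real.
move=> s s0; set d := Num.min (s / 2) 2^-1.
have d0 : 0 < d by rewrite lt_min divr_gt0 //= invr_gt0.
have [d_le_s2 d_le_half] : d <= s / 2 /\ d <= 2^-1 by split; rewrite ge_min lexx ?orbT.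
have d01 : 0 < d < 1 by rewrite d0 /=; lra.
near=> x.
have x1 : 1 <= x by near: x; apply: nbhs_pinfty_ge; exact: num_real.
have /andP[lo hi] := fine_Lambda_star_bounds x1 d01.
have : (1 - s) * x `^ p <= (1 - d) * x `^ p - ln (nu_const * expR d * (2 / d)).
  by near: x; apply: near_pinfty_powR_subr_ge => //; lra.
have : (x + 1) `^ p + - ln nu_const <= (1 + s) * x `^ p.
  by near: x; exact: near_pinfty_powR_addr1_addr_le.
by move=> ? ?; apply/andP; split; lra.
Unshelve. all: end_near.
Qed.

End nu_tail_and_rate_function.

Theorem theorem1p2 (R : realType) (p : R) (hp : 1 <= p) :
  (- ln (fine (nu p `[x, +oo[)) / fine (Lambda_star p x)) @[x --> +oo] --> (1 : R).
Proof.
apply: (@cvg_ratio1_trans _ _ _ (fun x => x `^ p)).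
- by near=> x; rewrite gt_eqF // powR_gt0 //; near: x; apply: nbhs_pinfty_gt; exact: num_real.
- exact: neg_ln_nu_itvcy_ratio.
- exact: Lambda_star_ratio.
Unshelve. all: end_near.
Qed.
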